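(* Let $\boldsymbol{\rho}$ be a $d\times d$ correlation matrix with coarsest partition $G^{\star}$, and let $\widehat{\boldsymbol{\rho}}$ be any real symmetric $d\times d$ matrix. Set $$\tau:=\max_{i,j,l\in[d]}\big|(\widehat\rho_{il}-\widehat\rho_{jl})-(\rho_{il}-\rho_{jl})\big|,\qquad \Delta:=\min_{i\not\sim j}\mathrm{CORD}(i,j)$$ (with $\Delta=+\infty$ if $G^\star$ has a single block). If $\tau\le\varepsilon<\Delta-\tau$, then the PARTITION procedure with inputs $\mathbf{D}=\widehat{\mathrm{CORD}}$ and $\varepsilon$ (with arbitrary tie-breaking in the argmin) outputs $\widehat G=G^{\star}$.
   Context: $[d]=\{1,\dots,d\}$. The coarsest partition $G^\star$ of $[d]$ consists of the equivalence classes of $i\sim j\iff \max_{l\neq i,j}|\rho_{il}-\rho_{jl}|=0$; $i\not\sim j$ means $i,j$ lie in different blocks. $\mathrm{CORD}(i,j):=\max_{l\neq i,j}|\rho_{il}-\rho_{jl}|$ and $\widehat{\mathrm{CORD}}(i,j):=\max_{l\neq i,j}|\widehat\rho_{il}-\widehat\rho_{jl}|$ for $i,j\in[d]$ (in particular both equal $0$ when $i=j$). PARTITION$(\mathbf{D},\varepsilon)$, for a $d\times d$ dissimilarity matrix $\mathbf{D}$ and $\varepsilon>0$: initialize $S=[d]$; while $S\neq\emptyset$: if $|S|=1$, output $S$ as a new block; if $|S|>1$, pick $(i,j)\in\operatorname{argmin}_{i,j\in S,\,i\neq j}\mathbf{D}(i,j)$; if $\mathbf{D}(i,j)>\varepsilon$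 the new block is $\{i\}$, otherwise the new block is $\{k\in S:\min(\mathbf{D}(i,k),\mathbf{D}(j,k))\le\varepsilon\}$; remove the new block from $S$ and repeat. The output $\widehat G$ is the collection of blocks produced. *)

From HB Require Import structures.
From mathcomp Require Import all_boot all_order all_algebra.
From mathcomp Require Import all_reals.
Set Implicit Arguments. Unset Strict Implicit. Unset Printing Implicit Defensive.
Import Order.TTheory GRing.Theory Num.Theory.
Local Open Scope ring_scope.

Section Defs.
Variables (R : realType) (d : nat).

Definition is_corr_matrix (rho : 'M[R]_d) : Prop :=
  [/\ rho^T = rho, (forall i, rho i i = 1) &
      (forall v : 'cV[R]_d, 0 <= (v^T *m rho *m v) 0 0)].

(* CORD(i,j) = max_{l <> i,j} |rho_il - rho_jl|  (empty max = 0; = 0 when i = j) *)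
Definition cord (rho : 'M[R]_d) (i j : 'I_d) : R :=
  \big[Num.max/0]_(l | (l != i) && (l != j)) `|rho i l - rho j l|.

Definition cord_mx (rho : 'M[R]_d) : 'M[R]_d := \matrix_(i, j) cord rho i j.

Definition cord_equiv (rho : 'M[R]_d) (i j : 'I_d) : bool := cord rho i j == 0.

Definition coarsest_partition (rho : 'M[R]_d) : {set {set 'I_d}} :=
  [set [set j | cord_equiv rho i j] | i : 'I_d].

Definition tau_err (rho rhohat : 'M[R]_d) : R :=
  \big[Num.max/0]_(i : 'I_d) \big[Num.max/0]_(j : 'I_d) \big[Num.max/0]_(l : 'I_d)
     `|(rhohat i l - rhohat j l) - (rho i l - rho j l)|.

Definition new_block (D : 'M[R]_d) (eps : R) (S : {set 'I_d}) (i j : 'I_d)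
  : {set 'I_d} :=
  if eps < D i j then [set i]
  else [set k in S | Num.min (D i k) (D j k) <= eps].

(* PARTITION(D, eps) as a relation: partition_run D eps S G means that, starting
   from the remaining set S, some execution (some tie-breaking of the argmin)
   outputs the collection of blocks G. *)
Inductive partition_run (D : 'M[R]_d) (eps : R)
  : {set 'I_d} -> {set {set 'I_d}} -> Prop :=
| pr_empty : partition_run D eps set0 set0
| pr_single (S : {set 'I_d}) : #|S| = 1%N -> partition_run D eps S [set S]
| pr_step (S : {set 'I_d}) (i j : 'I_d) (G : {set {set 'I_d}}) :
    (1 < #|S|)%N -> i \in S -> j \in S -> i != j ->
    (forall k l, k \in S -> l \in S -> k != l -> D i j <= D k l) ->
    partition_run D eps (S :\: new_block D eps S i j) G ->
    partition_run D eps S (new_block D eps S i j |: G).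

End Defs.

From HB Require Import structures.
From mathcomp Require Import all_boot all_order all_algebra.
From mathcomp Require Import all_reals.
Import Order.TTheory GRing.Theory Num.Theory.
Set Implicit Arguments. Unset Strict Implicit.
Local Open Scope ring_scope.

(* The proof has three independent parts.
   1. Perturbation: CORD is a max of absolute differences of row differences,
      so |CORD_hat(i,j) - CORD(i,j)| <= tau.  Together with tau <= eps and
      eps < Delta - tau this makes the threshold test exact:
      CORD_hat(i,j) <= eps  iff  i ~ j.
   2. Correctness: for any dissimilarity D whose eps-threshold is exactly an
      equivalence relation e, every run of PARTITION from an e-closed set S
      outputs the e-classes of the elements of S.  Indeed each step either
      finds all pairs of S above the threshold (so the new singleton {i} is the
      class of i) or collects the class of i, and removing a class keeps the
      remaining set e-closed.
   3. Termination: when D(i,i) <= eps every step removes at least i, so by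
      induction on |S| some run exists.
   For D = CORD_hat and e = ~ (an equivalence since rho is symmetric), parts
   2 and 3 applied to S = [d] give the theorem. *)

Section Cord.
Variables (R : realType) (d : nat).
Implicit Types (r rh : 'M[R]_d) (i j l : 'I_d).

Lemma cord_ge0 r i j : 0 <= cord r i j.
Proof. by rewrite /cord; elim/big_ind: _ => //= x y x0 y0; rewrite le_max x0. Qed.

Lemma cord_le r i j c :
  0 <= c -> (forall l, l != i -> l != j -> `|r i l - r j l| <= c) ->
  cord r i j <= c.
Proof. by move=> c0 bound; apply: bigmax_le => // l /andP[]; apply: bound. Qed.

Lemma cord_term r i j l :
  l != i -> l != j -> `|r i l - r j l| <= cord r i j.
Proof. by move=> li lj; apply: le_bigmax_cond; rewrite li lj. Qed.

Lemma cord_ii r i : cord r i i = 0.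
Proof.
by apply/le_anti; rewrite cord_ge0 andbT cord_le // => l _ _; rewrite subrr normr0.
Qed.

Lemma cord_sym r i j : cord r i j = cord r j i.
Proof.
rewrite /cord (eq_bigl (fun l => (l != j) && (l != i))) => [|l]; last exact: andbC.
by apply: eq_bigr => l _; rewrite distrC.
Qed.

Lemma cord0P r i j :
  cord r i j = 0 <-> (forall l, l != i -> l != j -> r i l = r j l).
Proof.
split=> [cord0 l li lj | rows_eq].
  apply/eqP; rewrite -subr_eq0 -normr_eq0 eq_le normr_ge0 andbT -cord0.
  exact: cord_term.
apply/le_anti; rewrite cord_ge0 andbT cord_le // => l li lj.
by rewrite rows_eq // subrr normr0.
Qed.

(* For a symmetric matrix, ~ is an equivalence relation; transitivity uses the
   symmetry to compare the entries in the column j of the middle index. *)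
Lemma cord_equiv_refl r : reflexive (cord_equiv r).
Proof. by move=> i; rewrite /cord_equiv cord_ii. Qed.

Lemma cord_equiv_sym r : symmetric (cord_equiv r).
Proof. by move=> i j; rewrite /cord_equiv cord_sym. Qed.

Lemma cord_equiv_trans r :
  (forall a b, r a b = r b a) -> transitive (cord_equiv r).
Proof.
move=> r_sym j i k /eqP/cord0P eq_ij /eqP/cord0P eq_jk; apply/eqP/cord0P => l li lk.
have [lj|lj] := eqVneq l j; last by rewrite eq_ij // eq_jk.
subst l; have [<-//|ik] := eqVneq i k.
have [ji kj ki] : [/\ i != j, k != j & k != i] by rewrite !(eq_sym k) eq_sym.
by rewrite r_sym (eq_jk i) // r_sym (eq_ij k) // r_sym.
Qed.

Lemma cord_perturb r1 r2 i j t :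
  (forall l, `|(r1 i l - r1 j l) - (r2 i l - r2 j l)| <= t) ->
  cord r1 i j <= cord r2 i j + t.
Proof.
move=> close; have t0 : 0 <= t by apply: le_trans (close i); exact: normr_ge0.
apply: cord_le => [|l li lj]; first by rewrite addr_ge0 ?cord_ge0.
set a := r1 i l - r1 j l; set b := r2 i l - r2 j l.
have -> : a = b + (a - b) by rewrite addrC subrK.
by apply: le_trans (ler_normD _ _) _; apply: lerD; [exact: cord_term | exact: close].
Qed.

Lemma tau_term r rh i j l :
  `|(rh i l - rh j l) - (r i l - r j l)| <= tau_err r rh.
Proof.
apply: le_trans (le_bigmax _ _ i); apply: le_trans (le_bigmax _ _ j).
exact: le_bigmax.
Qed.

Lemma cord_threshold_exact r rh eps i j :
  tau_err r rh <= eps ->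
  (forall i j, ~~ cord_equiv r i j -> eps < cord r i j - tau_err r rh) ->
  (cord rh i j <= eps) = cord_equiv r i j.
Proof.
move=> tau_le sep; have [equiv_ij|nequiv_ij] := boolP (cord_equiv r i j).
  apply: le_trans (cord_perturb (tau_term r rh i j)) _.
  by move/eqP: equiv_ij => ->; rewrite add0r.
apply/negbTE; rewrite -ltNge; apply: lt_le_trans (sep _ _ nequiv_ij) _.
by rewrite lerBlDr; apply: cord_perturb => l; rewrite distrC tau_term.
Qed.

End Cord.

Section PartitionCorrect.
Variables (R : realType) (d : nat) (D : 'M[R]_d) (eps : R) (e : rel 'I_d).
Hypotheses (e_refl : reflexive e) (e_sym : symmetric e) (e_trans : transitive e).
Hypothesis threshold_e : forall i j, (D i j <= eps) = e i j.

Definition e_class (x : 'I_d) : {set 'I_d} := [set y | e x y].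

Definition e_closed (S : {set 'I_d}) : Prop :=
  forall x y, x \in S -> e x y -> y \in S.

Lemma e_class_eq x y : e x y -> e_class x = e_class y.
Proof.
move=> xy; apply/setP => z; rewrite !inE; apply/idP/idP; last exact: e_trans.
by apply: e_trans; rewrite e_sym.
Qed.

(* One step of PARTITION on an e-closed set produces the class of the
   picked index i: if the minimal dissimilarity in S exceeds eps then no
   other element of S is equivalent to i. *)
Lemma new_block_class (S : {set 'I_d}) i j :
  e_closed S -> i \in S -> j \in S -> i != j ->
  (forall k l, k \in S -> l \in S -> k != l -> D i j <= D k l) ->
  new_block D eps S i j = e_class i.
Proof.
move=> closedS iS jS ij min_ij; rewrite /new_block; case: ltP => [above|below].
  apply/setP => y; rewrite !inE; apply/idP/idP => [/eqP->|iy]; first exact: e_refl.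
  apply/negPn/negP => yi; have := min_ij i y iS (closedS _ _ iS iy).
  rewrite eq_sym yi => /(_ isT) le_iy.
  have close_iy : D i y <= eps by rewrite threshold_e.
  by have := lt_le_trans above (le_trans le_iy close_iy); rewrite ltxx.
rewrite threshold_e in below.
apply/setP => y; rewrite !inE ge_min !threshold_e; apply/andP/idP => [[_]|iy].
  by case/orP => //; apply: e_trans.
by rewrite (closedS _ _ iS iy) iy.
Qed.

Lemma closed_setD_class (S : {set 'I_d}) i : e_closed S -> e_closed (S :\: e_class i).
Proof.
move=> closedS x y; rewrite !inE => /andP[ix xS] xy.
rewrite (closedS _ _ xS xy) andbT; apply: contra ix => iy.
by apply: e_trans iy _; rewrite e_sym.
Qed.

Lemma classes_setD_class (S : {set 'I_d}) i : i \in S ->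
  [set e_class x | x in S] = e_class i |: [set e_class x | x in S :\: e_class i].
Proof.
move=> iS; apply/setP => C; rewrite in_setU1; apply/imsetP/idP.
  move=> [x xS ->]; have [ix|nix] := boolP (e i x); first by rewrite (e_class_eq ix) eqxx.
  by apply/orP; right; apply/imsetP; exists x; rewrite // !inE nix.
case/orP => [/eqP->|/imsetP[x]]; first by exists i.
by rewrite inE => /andP[_ xS] ->; exists x.
Qed.

Lemma partition_run_classes S G :
  partition_run D eps S G -> e_closed S -> G = [set e_class x | x in S].
Proof.
elim=> {S G} [_|S /eqP/cards1P[x ->] closedS|S i j G _ iS jS ij min_ij _ IH closedS].
- by rewrite imset0.
- rewrite imset_set1; congr [set _]; apply/setP => y; rewrite !inE.
  apply/idP/idP => [/eqP->|xy]; first exact: e_refl.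
  by have := closedS x y; rewrite inE eqxx => /(_ isT xy); rewrite inE.
rewrite new_block_class // in IH *.
by rewrite (classes_setD_class iS) IH //; apply: closed_setD_class.
Qed.

End PartitionCorrect.

Section PartitionTerminates.
Variables (R : realType) (d : nat) (D : 'M[R]_d) (eps : R).
Hypothesis diag_le : forall i, D i i <= eps.

Lemma new_block_mem_sub (S : {set 'I_d}) i j :
  i \in S -> i \in new_block D eps S i j /\ new_block D eps S i j \subset S.
Proof.
move=> iS; rewrite /new_block; case: ifP => _; first by rewrite set11 sub1set.
split; first by rewrite inE iS ge_min diag_le.
by apply/subsetP => k; rewrite inE => /andP[].
Qed.

Lemma argmin_pair (S : {set 'I_d}) : (1 < #|S|)%N ->
  exists i j, [/\ i \in S, j \in S, i != j &
    forall k l, k \in S -> l \in S -> k != l -> D i j <= D k l].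
Proof.
case/card_gt1P => x [y [xS yS xy]].
pose P := [pred p : 'I_d * 'I_d | [&& p.1 \in S, p.2 \in S & p.1 != p.2]].
have Pxy : P (x, y) by rewrite /= xS yS xy.
case: (arg_minP (fun p : 'I_d * 'I_d => D p.1 p.2) Pxy) => [[i j]] /= /and3P[iS jS ij] min_ij.
by exists i, j; split=> // k l kS lS kl; apply: (min_ij (k, l)); rewrite /= kS lS kl.
Qed.

Lemma partition_run_exists (S : {set 'I_d}) : exists G, partition_run D eps S G.
Proof.
move: {2}#|S| (leqnn #|S|) => n; elim: n S => [|n IH] S sizeS.
  by move: sizeS; rewrite leqn0 => /eqP/cards0_eq ->; exists set0; apply: pr_empty.
case: (ltngtP #|S| 1) => [|many|one]; last by exists [set S]; apply: pr_single.
  by rewrite ltnS leqn0 => /eqP/cards0_eq ->; exists set0; apply: pr_empty.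
have [i [j [iS jS ij min_ij]]] := argmin_pair many.
have [iB BS] := new_block_mem_sub j iS.
have [G runG] : exists G, partition_run D eps (S :\: new_block D eps S i j) G.
  apply: IH; rewrite -ltnS; apply: leq_trans sizeS.
  rewrite -(cardsID (new_block D eps S i j) S) (setIidPr BS).
  by rewrite -[X in (X < _)%N]add0n ltn_add2r card_gt0; apply/set0Pn; exists i.
by exists (new_block D eps S i j |: G); apply: pr_step.
Qed.

End PartitionTerminates.

Unset Implicit Arguments.
Set Strict Implicit.

Theorem lemma1 (R : realType) (d : nat) (rho rhohat : 'M[R]_d) (eps : R) :
  is_corr_matrix rho ->
  rhohat^T = rhohat ->
  0 < eps ->
  tau_err rho rhohat <= eps ->
  (* eps < Delta - tau, with Delta = min over i !~ j of CORD(i,j) (= +oo if none) *)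
  (forall i j : 'I_d, ~~ cord_equiv rho i j ->
     eps < cord rho i j - tau_err rho rhohat) ->
  (exists G, partition_run (cord_mx rhohat) eps [set: 'I_d] G) /\
  (forall G, partition_run (cord_mx rhohat) eps [set: 'I_d] G ->
     G = coarsest_partition rho).
Proof.
move=> [rhoT _ _] _ eps_gt0 tau_le sep.
have rho_sym : forall a b, rho a b = rho b a by move=> a b; rewrite -{1}rhoT mxE.
have threshold : forall i j, (cord_mx rhohat i j <= eps) = cord_equiv rho i j.
  by move=> i j; rewrite mxE (cord_threshold_exact _ _ tau_le sep).
split=> [|G runG].
  by apply: partition_run_exists => i; rewrite mxE cord_ii ltW.
rewrite (partition_run_classes (@cord_equiv_refl _ _ rho) (@cord_equiv_sym _ _ rho)
          (cord_equiv_trans rho_sym) threshold runG) => [|x y _ _]; last by rewrite inE.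
by apply/setP => C; apply/imsetP/imsetP => -[x _ ->]; exists x.
Qed.
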